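(* Let $R$ be an integral domain and $\delta,\gamma,p,q\in R$. Let $a=\mathcal{W}(\delta,\gamma,p,q)$ and $u=\mathcal{W}(0,1,p,q)$. Then for every integer $k\ge1$, $$(a_{kn})_{n\ge0}=L^{(u_k,\,-qu_{k-1})}(a),$$ i.e. $a_{kn}=\sum_{i=0}^n\binom{n}{i}u_k^i(-qu_{k-1})^{n-i}a_i$ for all $n\ge0$.
   Context: $\mathcal{W}(\delta,\gamma,p,q)$ denotes the sequence $(a_n)_{n\ge0}$ with $a_0=\delta$, $a_1=\gamma$, $a_n=pa_{n-1}-qa_{n-2}$ for $n\ge2$. For $h,y\in R$, $L^{(h,y)}(a)$ is the sequence $b$ with $b_n=\sum_{i=0}^n\binom{n}{i}h^iy^{n-i}a_i$, with the convention $0^0=1$. *)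

From mathcomp Require Import all_boot all_algebra.
Set Implicit Arguments. Unset Strict Implicit. Unset Printing Implicit Defensive.
Import GRing.Theory.
Local Open Scope ring_scope.

(* W(delta,gamma,p,q): a_0 = delta, a_1 = gamma, a_n = p a_{n-1} - q a_{n-2}. *)
Fixpoint Wpair (R : ringType) (delta gamma p q : R) (n : nat) : R * R :=
  match n with
  | 0%N => (delta, gamma)
  | n'.+1 => let: (x, y) := Wpair delta gamma p q n' in (y, p * y - q * x)
  end.

Definition W (R : ringType) (delta gamma p q : R) (n : nat) : R :=
  (Wpair delta gamma p q n).1.

(* L^{(h,y)}(a)_n = sum_{i=0}^n C(n,i) h^i y^(n-i) a_i ; x ^+ 0 = 1 gives 0^0 = 1 *)
Definition Ltrans (R : ringType) (h y : R) (a : nat -> R) (n : nat) : R :=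
  \sum_(i < n.+1) (h ^+ i * y ^+ (n - i) * a i) *+ 'C(n, i).

From mathcomp Require Import all_boot all_algebra.
From mathcomp Require Import ring.
Set Implicit Arguments. Unset Strict Implicit.
Local Open Scope ring_scope.
Import GRing.Theory.

(* If the shift by k acts on a as x E + y, with E the shift by one, then the
   shift by k n acts as (x E + y)^n, and expanding this power binomially gives
   a_{kn} = L^{(x,y)}(a)_n.  For a Horadam sequence the addition formula
   a_{j+k} = u_k a_{j+1} - q u_{k-1} a_j provides exactly such x and y. *)

Section Ltrans.
Variables (R : comNzRingType) (h y : R).

Lemma eq_Ltrans (a b : nat -> R) n : a =1 b -> Ltrans h y a n = Ltrans h y b n.
Proof. by move=> eq_ab; apply: eq_bigr => i _; rewrite eq_ab. Qed.

Lemma Ltrans_linear (c d : R) (a b : nat -> R) n :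
  Ltrans h y (fun i => c * a i + d * b i) n =
  c * Ltrans h y a n + d * Ltrans h y b n.
Proof.
rewrite /Ltrans !mulr_sumr -big_split /=; apply: eq_bigr => i _.
by rewrite !mulrnAr -mulrnDl; congr (_ *+ _); ring.
Qed.

(* Pascal's rule for the binomial transform. *)
Lemma LtransS (a : nat -> R) n :
  Ltrans h y a n.+1 = h * Ltrans h y (fun i => a i.+1) n + y * Ltrans h y a n.
Proof.
rewrite /Ltrans big_ord_recl.
under eq_bigr => i _ do rewrite lift0 subSS binS mulrnDr.
rewrite big_split /= addrA addrC !mulr_sumr; congr (_ + _).
  by apply: eq_bigr => i _; rewrite mulrnAr exprS !mulrA.
rewrite big_ord_recr /= (bin_small (ltnSn n)) mulr0n addr0 [RHS]big_ord_recl /=.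
rewrite !subn0 !bin0 !mulr1n !expr0 !mul1r exprS mulrA; congr (_ + _).
apply: eq_bigr => i _; rewrite /bump /= add1n mulrnAr -subnSK // !exprS.
by congr (_ *+ _); ring.
Qed.

Lemma Ltrans_dilate (b : nat -> R) (k : nat) :
  (forall j, b (j + k)%N = h * b j.+1 + y * b j) ->
  forall n j, b (k * n + j)%N = Ltrans h y (fun i => b (i + j)%N) n.
Proof.
move=> b_shift; elim=> [|n IHn] j.
  by rewrite muln0 /Ltrans big_ord1 subnn !expr0 !mul1r bin0 mulr1n.
rewrite mulnS -addnA addnCA (addnC k) IHn LtransS -Ltrans_linear.
by apply: eq_Ltrans => i; rewrite addnA b_shift.
Qed.

End Ltrans.

Section Horadam.
Variables (R : comNzRingType) (p q : R).

Lemma WSS delta gamma n :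
  W delta gamma p q n.+2 = p * W delta gamma p q n.+1 - q * W delta gamma p q n.
Proof.
have snd_WpairE m : (Wpair delta gamma p q m).2 = W delta gamma p q m.+1.
  by rewrite /W /=; case: (Wpair _ _ _ _ m).
by rewrite -!snd_WpairE /W /=; case: (Wpair _ _ _ _ n).
Qed.

Lemma W_addS delta gamma j m :
  W delta gamma p q (j + m.+1) =
  W 0 1 p q m.+1 * W delta gamma p q j.+1 + - q * W 0 1 p q m * W delta gamma p q j.
Proof.
elim: m j => [|m IHm] j; first by rewrite addn1 /W /=; ring.
by rewrite -addSnnS IHm WSS [W 0 1 p q m.+2]WSS; ring.
Qed.

End Horadam.

Theorem theorem14 (R : idomainType) (delta gamma p q : R) (k : nat) :
  (1 <= k)%N ->
  forall n : nat,
    W delta gamma p q (k * n) =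
    Ltrans (W 0 1 p q k) (- q * W 0 1 p q k.-1) (W delta gamma p q) n.
Proof.
case: k => [//|m] _ n.
rewrite -[(m.+1 * n)%N]addn0 (Ltrans_dilate (W_addS p q delta gamma ^~ m)).
by apply: eq_Ltrans => i; rewrite addn0.
Qed.
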